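(* Let $p>5$ be a prime, $q=p^h$, and let $\mathcal{F}$ be the projective closure of $ax^n+by^m=1$ over $\mathbb{F}_q$, with $a,b\in\mathbb{F}_q^*$ and $m,n$ positive integers with $n\ge m>2$. If $p\mid(n+1)$ and $p\mid(m-1)$, then $\mathcal{F}$ is $\mathbb{F}_q$-Frobenius classical with respect to conics.
   Context: With $\varphi_0,\dots,\varphi_5$ the monomials of degree 2 in $x,y,1$, $\tau$ separating and $D^{(k)}_\tau$ Hasse derivatives, the $\mathbb{F}_q$-Frobenius order sequence w.r.t. conics is the lexicographically smallest $\nu_0<\dots<\nu_4$ such that the $6\times6$ determinant with first row $(\varphi_j^q)_j$ and rows $(D^{(\nu_i)}_\tau\varphi_j)_j$ is nonzero; the curve is $\mathbb{F}_q$-Frobenius classical w.r.t. conics if $\nu_i=i$ for all $i$. *)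

From mathcomp Require Import all_boot all_algebra all_field.
Set Implicit Arguments. Unset Strict Implicit. Unset Printing Implicit Defensive.
Import GRing.Theory.
Local Open Scope ring_scope.

Definition is_hasse_derivation (F K : fieldType) (iota : {rmorphism F -> K})
    (x : K) (D : nat -> K -> K) : Prop :=
  (forall u, D 0%N u = u) /\
  (forall k u v, D k (u + v) = D k u + D k v) /\
  (forall k u v, D k (u * v) = \sum_(i < k.+1) D i u * D (k - i)%N v) /\
  (forall i j u, D i (D j u) = ('C(i + j, i))%:R * D (i + j)%N u) /\
  (forall k c, (0 < k)%N -> D k (iota c) = 0) /\
  D 1%N x = 1 /\ (forall k, (1 < k)%N -> D k x = 0).

Definition transcendental_over (F K : fieldType) (iota : {rmorphism F -> K})
    (x : K) : Prop :=
  forall P : {poly F}, P != 0 -> (map_poly iota P).[x] != 0.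

Definition conic_monomials (K : fieldType) (x y : K) (j : 'I_6) : K :=
  nth 0 [:: 1; x; y; x ^+ 2; x * y; y ^+ 2] j.

Definition frob_mx (K : fieldType) (q : nat) (D : nat -> K -> K)
    (phi : 'I_6 -> K) (nu : 'I_5 -> nat) : 'M[K]_6 :=
  \matrix_(i < 6, j < 6)
    (if i == ord0 then phi j ^+ q else D (nu (inord i.-1)) (phi j)).

Definition strictly_incr (nu : 'I_5 -> nat) : Prop :=
  forall i j : 'I_5, (i < j)%N -> (nu i < nu j)%N.

Definition lex_lt (nu mu : 'I_5 -> nat) : Prop :=
  exists i : 'I_5, (forall j : 'I_5, (j < i)%N -> nu j = mu j) /\ (nu i < mu i)%N.

Definition is_frobenius_order_seq (K : fieldType) (q : nat) (D : nat -> K -> K)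
    (phi : 'I_6 -> K) (nu : 'I_5 -> nat) : Prop :=
  strictly_incr nu /\ \det (frob_mx q D phi nu) != 0 /\
  (forall mu, strictly_incr mu -> \det (frob_mx q D phi mu) != 0 -> ~ lex_lt mu nu).

Definition frobenius_classical_conics (K : fieldType) (q : nat)
    (D : nat -> K -> K) (x y : K) : Prop :=
  is_frobenius_order_seq q D (conic_monomials x y) (fun i => nat_of_ord i).

From mathcomp Require Import all_boot all_algebra all_field.
From mathcomp Require Import ring zify.
Set Implicit Arguments. Unset Strict Implicit. Unset Printing Implicit Defensive.
Import GRing.Theory.
Local Open Scope ring_scope.

(* Since p divides n + 1 and m - 1, the elements x^(n+1) and y^(m-1) are
   killed by D^(1), hence (as p > 4) by D^(1), ..., D^(4).  So are
   s = 1 / (b y^(m-1)) and t = -a x^(n+1) s, and the curve equation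
   b y^m = 1 - a x^n reads y = s + t / x.  The derivatives of order <= 4 of
   1, x, y, x^2, xy = s x + t, y^2 are then those of 1, x, x^2, x^-1, x^-2,
   and solving the linear system shows that any vector in the left kernel of
   the Frobenius matrix vanishes, provided (xy)^q <> s x^q + t.  Were
   (xy)^q = s x^q + t, eliminating y (using b^q = b) would give the relation
   (1 - a x^n)^(m+q-1) x^(qm) = (x^q - a x^(n+1))^m, whose two sides have
   different degrees in x, contradicting the transcendence of x.
   Lexicographic minimality is automatic: strictly increasing sequences
   satisfy nu_i >= i. *)

Lemma natf_fact_neq0_le (R : idomainType) i k :
  (i <= k)%N -> k`!%:R != 0 :> R -> i`!%:R != 0 :> R.
Proof.
by move=> le_ik; rewrite -(bin_fact le_ik) mulnCA natrM mulf_eq0 negb_or => /andP[].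
Qed.

Lemma pchar_fact_neq0 (R : idomainType) p k :
  p \in [pchar R] -> (k < p)%N -> k`!%:R != 0 :> R.
Proof.
move=> pR; have p_pr := pcharf_prime pR.
rewrite -(dvdn_pcharf pR); elim: k => [|k IHk] lt_kp.
  by rewrite dvdn1; apply: contraTneq p_pr => ->.
by rewrite factS Euclid_dvdM // negb_or gtnNdvd // IHk // ltnW.
Qed.

Lemma mulmx_frob_mx (K : fieldType) q (D : nat -> K -> K) (phi : 'I_6 -> K)
    (v : 'rV[K]_6) j :
  (v *m frob_mx q D phi (fun i => nat_of_ord i)) 0 j =
  v 0 0 * phi j ^+ q + \sum_(0 <= k < 5) v 0 (inord k.+1) * D k (phi j).
Proof.
rewrite mxE big_ord_recl !mxE big_mkord /=; congr (_ + _); apply: eq_bigr => k _.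
rewrite !mxE /= add0n inord_val; congr (v 0 _ * _).
by apply: val_inj; rewrite /= inordK // ltnS.
Qed.

Lemma strictly_incr_ge (nu : 'I_5 -> nat) (i : 'I_5) : strictly_incr nu -> (i <= nu i)%N.
Proof.
move=> nu_incr; case: i => i /= lt_i5; elim: i lt_i5 => // i IHi lt_i5.
have lt_i4 := ltnW lt_i5.
by apply: leq_ltn_trans (IHi lt_i4) (nu_incr (Ordinal lt_i4) (Ordinal lt_i5) _).
Qed.

Lemma det_neq0_frobenius_classical (K : fieldType) q (D : nat -> K -> K) x y :
  \det (frob_mx q D (conic_monomials x y) (fun i => nat_of_ord i)) != 0 ->
  frobenius_classical_conics q D x y.
Proof.
move=> det_neq0; split=> [//|]; split=> // mu mu_incr _ [i [_]].
by rewrite ltnNge strictly_incr_ge.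
Qed.

Section HasseDerivation.

Variables (F K : fieldType) (iota : {rmorphism F -> K}) (x : K) (D : nat -> K -> K).
Hypothesis hD : is_hasse_derivation iota x D.

Lemma hasse0 u : D 0 u = u.
Proof. by case: hD => D0 _; apply: D0. Qed.

Lemma hasseD k u v : D k (u + v) = D k u + D k v.
Proof. by case: hD => _ [DD _]; apply: DD. Qed.

Lemma hasseM k u v : D k (u * v) = \sum_(i < k.+1) D i u * D (k - i) v.
Proof. by case: hD => _ [_ [DM _]]; apply: DM. Qed.

Lemma hasse_comp i j u : D i (D j u) = 'C(i + j, i)%:R * D (i + j) u.
Proof. by case: hD => _ [_ [_ [Dcomp _]]]; apply: Dcomp. Qed.

Lemma hasse_rmorph k c : (0 < k)%N -> D k (iota c) = 0.
Proof. by case: hD => _ [_ [_ [_ [Dc _]]]]; apply: Dc. Qed.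

Lemma hasse1x : D 1 x = 1.
Proof. by case: hD => _ [_ [_ [_ [_ []]]]]. Qed.

Lemma hasse_x k : (1 < k)%N -> D k x = 0.
Proof. by case: hD => _ [_ [_ [_ [_ [_ Dx]]]]]; apply: Dx. Qed.

Lemma hasse_0 k : D k 0 = 0.
Proof. by apply: (addIr (D k 0)); rewrite -hasseD !add0r. Qed.

Lemma hasse1 k : (0 < k)%N -> D k 1 = 0.
Proof. by rewrite -(rmorph1 iota); apply: hasse_rmorph. Qed.

Lemma hasse_mulx k u : D k.+1 (x * u) = x * D k.+1 u + D k u.
Proof.
rewrite hasseM !big_ord_recl hasse0 hasse1x mul1r subn1 /= big1 ?addr0 // => i _.
by rewrite hasse_x ?mul0r.
Qed.

Lemma hasse_xn j k : D k (x ^+ j) = 'C(j, k)%:R * x ^+ (j - k).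
Proof.
elim: j k => [|j IHj] [|k]; rewrite ?hasse0 ?bin0 ?subn0 ?mul1r //.
  by rewrite hasse1 // bin0n mul0r.
rewrite exprS hasse_mulx !IHj binS natrD mulrDl subSS; congr (_ + _).
have [lt_kj|le_jk] := ltnP k j; first by rewrite mulrCA -exprS subnSK.
by rewrite bin_small ?mul0r ?mulr0 // ltnS.
Qed.

Lemma hasse_invx k : x != 0 -> D k x^-1 = (-1) ^+ k * x^-1 ^+ k.+1.
Proof.
move=> x_neq0; elim: k => [|k IHk]; first by rewrite hasse0 mul1r.
have := hasse_mulx k x^-1; rewrite divff // hasse1 // IHk => /esym/eqP.
by rewrite addr_eq0 => /eqP xD; rewrite -[LHS](mulKf x_neq0) xD !exprS; ring.
Qed.

Lemma hasse_invx_sqr k :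
  x != 0 -> D k (x^-1 ^+ 2) = (-1) ^+ k * k.+1%:R * x^-1 ^+ k.+2.
Proof.
move=> x_neq0; elim: k => [|k IHk]; first by rewrite hasse0 !mul1r.
have := hasse_mulx k (x^-1 ^+ 2).
rewrite expr2 mulVKf // -expr2 hasse_invx // IHk => /esym /(canRL (addrK _)) xD.
by rewrite -[LHS](mulKf x_neq0) xD !exprS mulrS; ring.
Qed.

Lemma hasse1M u v : D 1 (u * v) = u * D 1 v + D 1 u * v.
Proof. by rewrite hasseM !big_ord_recl big_ord0 !hasse0 addr0 addrC. Qed.

Lemma hasse1X u j : D 1 (u ^+ j) = j%:R * u ^+ j.-1 * D 1 u.
Proof.
elim: j => [|j IHj]; first by rewrite hasse1 // !mul0r.
rewrite exprS hasse1M IHj; case: j {IHj} => [|j]; last by rewrite exprS mulrS; ring.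
by rewrite !expr0 !mul0r mulr0 !mul1r add0r mulr1.
Qed.

Lemma hasse1_rmorph c : D 1 (iota c) = 0.
Proof. exact: hasse_rmorph. Qed.

Lemma hasse1X_eq0 u j : j%:R = 0 :> K -> D 1 (u ^+ j) = 0.
Proof. by move=> j0; rewrite hasse1X j0 !mul0r. Qed.

Lemma hasse1M_eq0 u v : D 1 u = 0 -> D 1 v = 0 -> D 1 (u * v) = 0.
Proof. by move=> Du Dv; rewrite hasse1M Du Dv mulr0 mul0r addr0. Qed.

Lemma hasse1V_eq0 u : D 1 u = 0 -> D 1 u^-1 = 0.
Proof.
have [->|u_neq0 Du] := eqVneq u 0; first by rewrite invr0.
have := hasse1M u u^-1; rewrite divff // hasse1 // Du mul0r addr0 => /esym/eqP.
by rewrite mulf_eq0 (negPf u_neq0) => /eqP.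
Qed.

(* D^(1) D^(k) = (k + 1) D^(k+1) *)
Lemma hasse_eq0_ker1 c k : D 1 c = 0 -> (0 < k)%N -> k`!%:R != 0 :> K -> D k c = 0.
Proof.
move=> Dc; elim: k => [|[|k] IHk] // _ fact_neq0.
have := hasse_comp 1 k.+1 c; rewrite IHk ?hasse_0 //; last first.
  by rewrite (natf_fact_neq0_le _ fact_neq0).
rewrite bin1 => /esym/eqP; rewrite mulf_eq0 => /orP[|/eqP //].
by move: fact_neq0; rewrite factS natrM mulf_eq0 negb_or => /andP[/negPf->].
Qed.

Lemma hasseMl_ker1 c u k :
  D 1 c = 0 -> k`!%:R != 0 :> K -> D k (c * u) = c * D k u.
Proof.
move=> Dc fact_neq0; rewrite hasseM big_ord_recl hasse0 subn0 big1 ?addr0 // => i _.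
by rewrite hasse_eq0_ker1 ?mul0r // (natf_fact_neq0_le _ fact_neq0) /= ?ltn_ord.
Qed.

Section AffineInInverse.

Variables (y s t : K).
Hypotheses (x_neq0 : x != 0) (Ds : D 1 s = 0) (Dt : D 1 t = 0).
Hypotheses (fact4 : 4`!%:R != 0 :> K) (y_def : y = s + t / x).

Let hasse_const c k : D 1 c = 0 -> (0 < k <= 4)%N -> D k c = 0.
Proof. by move=> Dc /andP[k0 k4]; rewrite hasse_eq0_ker1 // (natf_fact_neq0_le k4). Qed.

Let hasse_scale c u k : D 1 c = 0 -> (k <= 4)%N -> D k (c * u) = c * D k u.
Proof. by move=> Dc k4; rewrite hasseMl_ker1 // (natf_fact_neq0_le k4). Qed.

Lemma mulx_affine_invx : x * y = s * x + t.
Proof. by rewrite y_def mulrDr [x * s]mulrC mulrCA divff // mulr1. Qed.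

Lemma hasse_mulx_affine_invx k : (0 < k <= 4)%N -> D k (x * y) = s * D k x.
Proof.
move=> k_le4; rewrite mulx_affine_invx hasseD (hasse_const Dt) // addr0.
by rewrite hasse_scale //; case/andP: k_le4.
Qed.

Lemma hasse_affine_invx k : (0 < k <= 4)%N -> D k y = t * D k x^-1.
Proof.
move=> k_le4; rewrite y_def hasseD (hasse_const Ds) // add0r.
by rewrite hasse_scale //; case/andP: k_le4.
Qed.

Lemma hasse_affine_invx_sqr k : (0 < k <= 4)%N ->
  D k (y ^+ 2) = (s * t) *+ 2 * D k x^-1 + t ^+ 2 * D k (x^-1 ^+ 2).
Proof.
move=> /andP[k0 k4].
have Dsq u : D 1 u = 0 -> D 1 (u ^+ 2) = 0 by move=> Du; rewrite expr2 hasse1M_eq0.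
have Dst2 : D 1 (s * t *+ 2) = 0 by rewrite mulr2n hasseD hasse1M_eq0 // addr0.
have -> : y ^+ 2 = s ^+ 2 + ((s * t) *+ 2 * x^-1 + t ^+ 2 * x^-1 ^+ 2).
  by rewrite y_def; ring.
rewrite !hasseD (hasse_const (Dsq _ Ds)) ?k0 // add0r.
by rewrite (hasse_scale _ Dst2) // (hasse_scale _ (Dsq _ Dt)).
Qed.

Lemma det_frob_mx_conics_neq0 q : t != 0 -> (x * y) ^+ q != s * x ^+ q + t ->
  \det (frob_mx q D (conic_monomials x y) (fun i => nat_of_ord i)) != 0.
Proof.
move=> t_neq0 nondeg; apply/negP => /det0P[v v_neq0 vM].
pose w i := v 0 (inord i).
pose L u := v 0 0 * u ^+ q + w 1 * u + w 2 * D 1 u + w 3 * D 2 u + w 4 * D 3 u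
  + w 5 * D 4 u.
have row j : L (conic_monomials x y j) = 0.
  have := mulmx_frob_mx q D (conic_monomials x y) v j.
  by rewrite vM mxE !big_nat_recl // big_geq // hasse0 addr0 !addrA => ->.
have := row 0; have := row 1; have := row 2; have := row 3; have := row 4.
have := row 5; rewrite /L /conic_monomials /= !hasse1 // !hasse1x !hasse_x //.
rewrite !hasse_xn bin1 binn !bin_small // !hasse_mulx_affine_invx //.
rewrite !hasse_affine_invx // !hasse_affine_invx_sqr // !hasse1x !hasse_x //.
rewrite !hasse_invx // !hasse_invx_sqr // expr1n !mulr1 !mulr0 !addr0.
move=> Ey2 Exy Ex2 Ey Ex E1.
have w1E : w 1 = - v 0 0 by apply/eqP; rewrite -addr_eq0 addrC E1.
have w2E : w 2 = - (v 0 0 * x ^+ q + w 1 * x).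
  by apply/eqP; rewrite -addr_eq0 addrC Ex.
have v00 : v 0 0 = 0.
  have : v 0 0 * ((x * y) ^+ q - (s * x ^+ q + t)) = 0.
    by rewrite -[RHS]Exy w2E w1E mulx_affine_invx; ring.
  by move/eqP; rewrite mulf_eq0 subr_eq0 (negPf nondeg) orbF => /eqP.
have w10 : w 1 = 0 by rewrite w1E v00 oppr0.
have w20 : w 2 = 0 by rewrite w2E v00 w10 !mul0r addr0 oppr0.
have w30 : w 3 = 0 by rewrite -[RHS]Ex2 v00 w10 w20; ring.
have w4E : w 4 = w 5 / x.
  have : t * x^-1 ^+ 4 * (w 5 / x - w 4) = 0.
    by rewrite -[RHS]Ey v00 w10 w20 w30; ring.
  have nz : t * x^-1 ^+ 4 != 0 by rewrite mulf_neq0 // expf_neq0 // invr_eq0.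
  by move/eqP; rewrite mulf_eq0 (negPf nz) subr_eq0 eq_sym => /eqP.
have w50 : w 5 = 0.
  have : t ^+ 2 * x^-1 ^+ 6 * w 5 = 0.
    by rewrite -[RHS]Ey2 v00 w10 w20 w30 w4E; ring.
  have nz : t ^+ 2 * x^-1 ^+ 6 != 0 by rewrite mulf_neq0 // expf_neq0 // invr_eq0.
  by move/eqP; rewrite mulf_eq0 (negPf nz) => /eqP.
have w_eq0 (i : 'I_6) : w i = 0.
  case: i => [[|[|[|[|[|[|//]]]]]] _] /=; rewrite ?w10 ?w20 ?w30 ?w50 //.
    by rewrite /w (_ : inord 0 = 0) //; apply: val_inj; rewrite /= inordK.
  by rewrite w4E w50 mul0r.
move/negP: v_neq0; apply; apply/eqP/rowP => i.
by rewrite mxE -[i]inord_val; apply: w_eq0.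
Qed.

End AffineInInverse.

End HasseDerivation.

Lemma transcendental_neq0 (F K : fieldType) (iota : {rmorphism F -> K}) x :
  transcendental_over iota x -> x != 0.
Proof. by move=> /(_ 'X); rewrite polyX_eq0 map_polyX hornerX; apply. Qed.

(* The left side has degree at most max(q, n + 1) m, the right side
   n (m + q - 1) + q m. *)
Lemma fermat_poly_neq0 (R : idomainType) (a : R) n m q :
  a != 0 -> (0 < n)%N -> (1 < q)%N ->
  ('X^q - a%:P * 'X^(n.+1)) ^+ m
    != (1 - a%:P * 'X^n) ^+ (m + q).-1%N * 'X^(q * m)%N.
Proof.
move=> a_neq0 n_gt0 q_gt1; apply/eqP => /(congr1 (fun P : {poly R} => size P)).
have sizeU : size (1 - a%:P * 'X^n) = n.+1.
  rewrite addrC size_polyDl size_polyN size_Cmul ?size_polyXn //.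
  by rewrite size_polyC oner_eq0.
have sizeV : (size ('X^q - a%:P * 'X^(n.+1) : {poly R})%R <= (maxn q n.+1).+1)%N.
  by rewrite (leq_trans (size_polyD _ _)) // size_polyN size_Cmul // !size_polyXn maxnSS.
have U_neq0 : 1 - a%:P * 'X^n != 0 by rewrite -size_poly_eq0 sizeU.
have sizeUX : size ((1 - a%:P * 'X^n) ^+ (m + q).-1%N * 'X^(q * m)%N) =
    (n * (m + q).-1 + q * m).+1%N.
  rewrite size_mul ?expf_neq0 ?polyX_eq0 // size_polyXn addnS /=.
  by rewrite -[size _]prednK ?lt0n ?size_poly_eq0 ?expf_neq0 // size_exp sizeU mulnC.
rewrite sizeUX => eq_size; have := size_poly_exp_leq ('X^q - a%:P * 'X^(n.+1)) m.
have le_deg : ((size ('X^q - a%:P * 'X^(n.+1) : {poly R})%R).-1 <= maxn q n.+1)%N.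
  by move: sizeV; lia.
rewrite eq_size ltnS => /leq_trans/(_ (leq_mul le_deg (leqnn m))).
nia.
Qed.

Section FermatCurve.

Variables (F : finFieldType) (K : fieldType) (iota : {rmorphism F -> K}).
Variables (a b : F) (n m : nat) (x y : K).
Hypotheses (a_neq0 : a != 0) (b_neq0 : b != 0) (n_gt0 : (0 < n)%N) (m_gt0 : (0 < m)%N).
Hypotheses (x_tr : transcendental_over iota x).
Hypothesis (curve : iota a * x ^+ n + iota b * y ^+ m = 1).

Let s := (iota b * y ^+ m.-1)^-1.
Let t := iota (- a) * x ^+ n.+1 * s.

Lemma fermat_ypow : iota b * y ^+ m = 1 - iota a * x ^+ n.
Proof. by rewrite -curve addrC addKr. Qed.

Lemma fermat_ypow_neq0 : iota b * y ^+ m != 0.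
Proof.
have := @x_tr (1 - a%:P * 'X^n); rewrite rmorphB rmorph1 rmorphM /= map_polyC.
rewrite map_polyXn !hornerE -fermat_ypow; apply.
apply/eqP => /(congr1 (horner^~ 0)) /eqP.
by rewrite !hornerE expr0n gtn_eqF //= mulr0 subr0 oner_eq0.
Qed.

Lemma fermat_y_neq0 : y != 0.
Proof. by apply: contraNneq fermat_ypow_neq0 => ->; rewrite expr0n gtn_eqF // mulr0. Qed.

Lemma fermat_y_affine_invx : y = s + t / x.
Proof.
have x_neq0 := transcendental_neq0 x_tr.
have ib_neq0 : iota b != 0 by rewrite fmorph_eq0.
have y_neq0 := fermat_y_neq0.
have -> : s + t / x = s * (iota b * y ^+ m).
  by rewrite fermat_ypow /t exprSr rmorphN; field.
by rewrite /s -[in y ^+ m](prednK m_gt0) exprSr; field; rewrite expf_neq0 // ib_neq0.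
Qed.

Lemma fermat_t_neq0 : t != 0.
Proof.
rewrite !mulf_neq0 ?fmorph_eq0 ?oppr_eq0 ?expf_neq0 ?invr_eq0 //.
  exact: transcendental_neq0 x_tr.
by rewrite mulf_neq0 ?fmorph_eq0 ?expf_neq0 ?fermat_y_neq0.
Qed.

(* Multiplying by b y^m = b y^(m-1) y eliminates s and t; raising to the
   m-th power and using b^q = b then eliminates y. *)
Lemma fermat_frobenius_relation :
  (x * y) ^+ #|F| = s * x ^+ #|F| + t ->
  (1 - iota a * x ^+ n) ^+ (m + #|F|).-1 * x ^+ (#|F| * m) =
  (x ^+ #|F| - iota a * x ^+ n.+1) ^+ m.
Proof.
set q := #|F|; set U := 1 - iota a * x ^+ n; set V := x ^+ q - _ => frob_eq.
have U_def : iota b * y ^+ m.-1 * y = U.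
  by rewrite -mulrA -exprSr prednK ?fermat_ypow.
have UV_y : U * (x * y) ^+ q = y * V.
  rewrite -U_def frob_eq /t /s /V rmorphN; field.
  by rewrite expf_neq0 ?fermat_y_neq0 ?fmorph_eq0.
have bq : iota b ^+ q = iota b by rewrite -rmorphXn expf_card.
have : iota b * (U * (x * y) ^+ q) ^+ m = U ^+ (m + q) * x ^+ (q * m).
  transitivity (U ^+ m * x ^+ (q * m) * (iota b * y ^+ m) ^+ q).
    by rewrite -{1}bq !exprMn -!exprM mulnC; ring.
  by rewrite fermat_ypow -/U exprD; ring.
rewrite UV_y exprMn mulrA fermat_ypow -/U => UV_eq.
have U_neq0 : U != 0 by rewrite /U -fermat_ypow fermat_ypow_neq0.
apply: (mulfI U_neq0); rewrite UV_eq mulrA -exprS prednK //.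
by rewrite addn_gt0 m_gt0.
Qed.

Lemma fermat_frobenius_nondeg : (x * y) ^+ #|F| != s * x ^+ #|F| + t.
Proof.
apply/negP => /eqP /fermat_frobenius_relation /eqP.
have := fermat_poly_neq0 m a_neq0 n_gt0 (card_finNzRing_gt1 F).
rewrite -subr_eq0 => /x_tr; rewrite !(rmorphB, rmorphM, rmorphXn, rmorph1) /=.
by rewrite map_polyC map_polyX !hornerE subr_eq0 eq_sym => /negPf->.
Qed.

End FermatCurve.

Theorem proposition3p14
  (p h : nat) (F : finFieldType) (K : fieldType) (iota : {rmorphism F -> K})
  (a b : F) (n m : nat) (x y : K) (D : nat -> K -> K) :
  prime p -> (5 < p)%N -> #|F| = (p ^ h)%N ->
  a != 0 -> b != 0 ->
  (0 < m)%N -> (0 < n)%N -> (m <= n)%N -> (2 < m)%N ->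
  (p %| n.+1)%N -> (p %| m.-1)%N ->
  transcendental_over iota x ->
  iota a * x ^+ n + iota b * y ^+ m = 1 ->
  is_hasse_derivation iota x D ->
  frobenius_classical_conics (p ^ h)%N D x y.
Proof.
move=> p_prime p_gt5 cardF a_neq0 b_neq0 m_gt0 n_gt0 _ _ p_dvd_n1 p_dvd_m1 x_tr curve hD.
have pK : p \in [pchar K] := rmorph_pchar iota (card_finPcharP cardF p_prime).
have natK0 j : (p %| j)%N -> j%:R = 0 :> K by rewrite (dvdn_pcharf pK) => /eqP.
have Ds : D 1 (iota b * y ^+ m.-1)^-1 = 0.
  by rewrite (hasse1V_eq0 hD) // (hasse1M_eq0 hD) ?(hasse1_rmorph hD)
    ?(hasse1X_eq0 hD) ?natK0.
have Dt : D 1 (iota (- a) * x ^+ n.+1 * (iota b * y ^+ m.-1)^-1) = 0.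
  by rewrite !(hasse1M_eq0 hD) ?(hasse1_rmorph hD) ?(hasse1X_eq0 hD) ?natK0.
rewrite -cardF; apply/det_neq0_frobenius_classical.
apply: (det_frob_mx_conics_neq0 hD (transcendental_neq0 x_tr) Ds Dt).
- exact: pchar_fact_neq0 pK (ltn_trans _ p_gt5).
- exact: fermat_y_affine_invx.
- exact: fermat_t_neq0.
- exact: fermat_frobenius_nondeg.
Qed.
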